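(* Let $\mathbf{u}$ be quasi-definite with SMOP $(P_n)$ satisfying $xP_n=P_{n+1}+b_nP_n+a_nP_{n-1}$, and suppose $\mathbf{u}^{-1}$ is quasi-definite with SMOP $(P^-_n)$. Let $J^{(1)}$ and $J^-$ be the monic Jacobi matrices of $\mathbf{u}^{(1)}$ and $\mathbf{u}^{-1}$. Define $\alpha_{1,0}=b_0+b_1$ and, for $n\ge2$, $$\alpha_{n,n-1}=-\frac{W(P_{n+1},P_{n-1})(0)}{W(P_n,P_{n-1})(0)},\qquad \alpha_{n,n-2}=\frac{W(P_{n+1},P_n)(0)}{W(P_n,P_{n-1})(0)},$$ and for $n\ge0$ $$\beta_{n,n}=\frac{W(P^-_{n+1},P^-_{n+2})(0)}{W(P^-_n,P^-_{n+1})(0)},\qquad \beta_{n,n+1}=-\frac{W(P^-_n,P^-_{n+2})(0)}{W(P^-_n,P^-_{n+1})(0)}$$ (all denominators are nonzero). Let $L$ be the lower triangular matrix with $L_{n,n}=1$, $L_{n,n-1}=\alpha_{n,n-1}$, $L_{n,n-2}=\alpha_{n,n-2}$, other entries $0$, and $U$ the upper triangular matrix with $U_{n,n}=\beta_{n,n}$, $U_{n,n+1}=\beta_{n,n+1}$, $U_{n,n+2}=1$, other entries $0$. Then $P^-_n=P^{(1)}_n+\alpha_{n,n-1}P^{(1)}_{n-1}+\alpha_{n,n-2}P^{(1)}_{n-2}$, $x^2P^{(1)}_n=P^-_{n+2}+\beta_{n,n+1}P^-_{n+1}+\beta_{n,n}P^-_n$, and $$\big(J^{(1)}\big)^2=UL,\qquad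 \big(J^-\big)^2=LU.$$
   Context: Linear functionals on complex polynomials, moments $\mathbf{u}_n$; the inverse $\mathbf{u}^{-1}$ is the functional with $\sum_{k=0}^n\mathbf{u}_k(\mathbf{u}^{-1})_{n-k}=\delta_{n,0}$. Quasi-definite: all leading principal Hankel minors of the moments nonzero; then a unique sequence of monic orthogonal polynomials (SMOP) exists with $xP_n=P_{n+1}+b_nP_n+a_nP_{n-1}$, $P_{-1}=0$, $P_0=1$, $a_n\ne0$. $\mathbf{u}^{(1)}$ denotes a (quasi-definite) functional whose SMOP is the sequence of associated polynomials of the first kind: monic, $xP^{(1)}_n=P^{(1)}_{n+1}+b_{n+1}P^{(1)}_n+a_{n+1}P^{(1)}_{n-1}$, $P^{(1)}_{-1}=0$, $P^{(1)}_0=1$ (with convention $P^{(1)}_{-1}=0$ in the expansions). The monic Jacobi matrix of a functional is the tridiagonal matrix with diagonal $(b_0,b_1,\dots)$, superdiagonal $1$'s and subdiagonal $(a_1,a_2,\dots)$ of its SMOP recurrence. Wronskian $W(p,q)(x)=p(x)q'(x)-p'(x)q(x)$. *)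

From HB Require Import structures.
From mathcomp Require Import all_boot all_order all_algebra.
From mathcomp Require Import complex.
From mathcomp Require Import Rstruct.
Set Implicit Arguments. Unset Strict Implicit. Unset Printing Implicit Defensive.
Import Order.TTheory GRing.Theory Num.Theory.
Local Open Scope ring_scope.

Definition C : Type := (Rdefinitions.R)[i].

(* A linear functional on C[x] is given by its moments u_n = <u, x^n>. *)
Definition moments := nat -> C.

Definition fapp (u : moments) (p : {poly C}) : C :=
  \sum_(k < size p) p`_k * u k.

Definition is_inverse (u v : moments) : Prop :=
  forall n : nat, \sum_(k < n.+1) u k * v (n - k)%N = (n == 0%N)%:R.

Definition quasi_definite (u : moments) : Prop :=
  forall n : nat, \det (\matrix_(i < n.+1, j < n.+1) u (i + j)%N) != 0.

Definition is_SMOP (u : moments) (P : nat -> {poly C}) : Prop :=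
  [/\ forall n, P n \is monic,
      forall n, size (P n) = n.+1,
      forall n m, n != m -> fapp u (P n * P m) = 0
    & forall n, fapp u (P n * P n) != 0].

Definition TTRR (P : nat -> {poly C}) (a b : nat -> C) : Prop :=
  [/\ P 0%N = 1,
      'X * P 0%N = P 1%N + b 0%N *: P 0%N,
      forall n, 'X * P n.+1 = P n.+2 + b n.+1 *: P n.+1 + a n.+1 *: P n
    & forall n, a n.+1 != 0].

(* associated polynomials of the first kind:
   x P1_n = P1_{n+1} + b_{n+1} P1_n + a_{n+1} P1_{n-1}, P1_{-1}=0, P1_0=1 *)
Fixpoint assoc1_aux (a b : nat -> C) (n : nat) : {poly C} * {poly C} :=
  (* returns (P1_n, P1_{n+1}) *)
  match n with
  | 0%N => (1, 'X - (b 1%N)%:P)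
  | m.+1 => let (p, q) := assoc1_aux a b m in
            (q, ('X - (b m.+2)%:P) * q - a m.+2 *: p)
  end.
Definition assoc1 (a b : nat -> C) (n : nat) : {poly C} := (assoc1_aux a b n).1.

Definition wronsk (p q : {poly C}) : {poly C} := p * q^`() - p^`() * q.

Definition infmx := nat -> nat -> C.

Definition jacobi (c d : nat -> C) : infmx := fun i j =>
  if i == j then c i
  else if j == i.+1 then 1
  else if i == j.+1 then d i
  else 0.

(* C = A B as infinite matrices: for every (i,j) the series
   sum_k A_{i,k} B_{k,j} converges to C_{i,j}, i.e. (terms being eventually
   zero in our case) its partial sums are eventually equal to C_{i,j}. *)
Definition mxprod_is (A B M : infmx) : Prop :=
  forall i j, exists K, forall K', (K <= K')%N ->
    \sum_(k < K') A i k * B k j = M i j.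

Definition alpha1 (P : nat -> {poly C}) (b : nat -> C) (n : nat) : C :=
  match n with
  | 0%N => 0
  | 1%N => b 0%N + b 1%N
  | _ => - ((wronsk (P n.+1) (P n.-1)).[0] / (wronsk (P n) (P n.-1)).[0])
  end.
Definition alpha2 (P : nat -> {poly C}) (n : nat) : C :=
  match n with
  | 0%N | 1%N => 0
  | _ => (wronsk (P n.+1) (P n)).[0] / (wronsk (P n) (P n.-1)).[0]
  end.

Definition beta0 (Pm : nat -> {poly C}) (n : nat) : C :=
  (wronsk (Pm n.+1) (Pm n.+2)).[0] / (wronsk (Pm n) (Pm n.+1)).[0].
Definition beta1 (Pm : nat -> {poly C}) (n : nat) : C :=
  - ((wronsk (Pm n) (Pm n.+2)).[0] / (wronsk (Pm n) (Pm n.+1)).[0]).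

Definition Lmx (P : nat -> {poly C}) (b : nat -> C) : infmx := fun i j =>
  if i == j then 1
  else if i == j.+1 then alpha1 P b i
  else if i == j.+2 then alpha2 P i
  else 0.

Definition Umx (Pm : nat -> {poly C}) : infmx := fun i j =>
  if j == i then beta0 Pm i
  else if j == i.+1 then beta1 Pm i
  else if j == i.+2 then 1
  else 0.

From HB Require Import structures.
From mathcomp Require Import all_boot all_order all_algebra.
From mathcomp Require Import complex Rstruct.
From mathcomp Require Import ring zify.
Import Order.TTheory GRing.Theory Num.Theory.
Local Open Scope ring_scope.
Set Implicit Arguments. Unset Strict Implicit.

(* The proof rests on one identity (inv_pairing_assoc_low): for j <= m + 1,
     u_0 u^{-1}(x^j P1_m) = [j = 0] P_{m+1}'(0) + [j = 1] P_{m+1}(0),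
   obtained by induction on m from the recurrence of the associated
   polynomials, using u u^{-1} = delta and the orthogonality of (P_n).  So
   x^2 u^{-1} is orthogonal to x^j P1_m for j < m, and u^{-1} sees P1_m only
   through P_{m+1}(0) and P_{m+1}'(0).  Combined with uniqueness and
   expansion properties of orthogonal families, this yields in turn:
   W(P_{n+1}, P_n)(0) != 0, the expansion of P^-_n in the P1's,
   orthogonality of (P1_n) for x^2 u^{-1}, W(P^-_n, P^-_{n+1})(0) != 0 and
   the expansion of x^2 P1_n in the P^-'s.  The matrix identities follow
   because J^(1), J^-, L and U are banded: a banded matrix is determined by
   its action on a monic polynomial sequence, and both (J^(1))^2 and UL map
   (P1_n) to (x^2 P1_n), while (J^-)^2 and LU map (P^-_n) to (x^2 P^-_n).
   Quasi-definiteness is only used through the existence of the two SMOPs. *)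

Lemma fappE (w : moments) (p : {poly C}) n : (size p <= n)%N ->
  fapp w p = \sum_(k < n) p`_k * w k.
Proof.
move=> h; rewrite /fapp (big_ord_widen n (fun k => p`_k * w k) h) big_mkcond /=.
apply: eq_bigr => k _; case: ifP => // /negbT; rewrite -leqNgt => hk.
by rewrite nth_default // mul0r.
Qed.

Lemma fapp0 w : fapp w 0 = 0.
Proof. by rewrite /fapp size_poly0 big_ord0. Qed.

Lemma fapp1 w : fapp w 1 = w 0%N.
Proof. by rewrite /fapp size_poly1 big_ord1 coef1 mul1r. Qed.

Lemma fappD w p q : fapp w (p + q) = fapp w p + fapp w q.
Proof.
rewrite (fappE w (size_polyD p q)).
rewrite (fappE w (leq_maxl (size p) (size q))) (fappE w (leq_maxr (size p) (size q))).
by rewrite -big_split; apply: eq_bigr => k _; rewrite coefD mulrDl.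
Qed.

Lemma fappZ w c p : fapp w (c *: p) = c * fapp w p.
Proof.
rewrite (fappE w (size_scale_leq c p)) /fapp mulr_sumr.
by apply: eq_bigr => k _; rewrite coefZ mulrA.
Qed.

Lemma fappB w p q : fapp w (p - q) = fapp w p - fapp w q.
Proof. by rewrite fappD -scaleN1r fappZ mulN1r. Qed.

Lemma fappX_lin3 w (A B E : {poly C}) c d j :
  fapp w ('X^j * (A + c *: B + d *: E)) =
  fapp w ('X^j * A) + c * fapp w ('X^j * B) + d * fapp w ('X^j * E).
Proof. by rewrite !mulrDr -!scalerAr !fappD !fappZ. Qed.

Lemma fappX_lin2 w (A B : {poly C}) l m j :
  fapp w ('X^j * (l *: A + m *: B)) = l * fapp w ('X^j * A) + m * fapp w ('X^j * B).
Proof. by rewrite mulrDr -!scalerAr fappD !fappZ. Qed.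

Lemma fapp_ext w w' p : (forall n, w n = w' n) -> fapp w p = fapp w' p.
Proof. by move=> h; apply: eq_bigr => k _; rewrite h. Qed.

Lemma fappX w p : fapp w ('X * p) = fapp (fun n => w n.+1) p.
Proof.
have h : (size ('X * p)%R <= (size p).+1)%N.
  apply/leq_sizeP => j hj; rewrite coefXM; case: j hj => //= j hj.
  by rewrite nth_default.
rewrite (fappE w h) big_ord_recl coefXM /= mul0r add0r /fapp.
by apply: eq_bigr => k _; rewrite coefXM.
Qed.

Lemma fappXn w k p : fapp w ('X^k * p) = fapp (fun n => w (n + k)%N) p.
Proof.
elim: k w => [|k IH] w.
  by rewrite expr0 mul1r; apply: fapp_ext => n; rewrite addn0.
by rewrite exprS -mulrA fappX IH; apply: fapp_ext => n; rewrite addnS.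
Qed.

Lemma fappXn1 w k : fapp w 'X^k = w k.
Proof. by rewrite -[X in fapp _ X]mulr1 fappXn fapp1. Qed.

(* The functional x^2 w, with moments w_{n+2}. *)
Lemma fapp_shift2 (w : moments) j (q : {poly C}) :
  fapp (fun k => w (k + 2)%N) ('X^j * q) = fapp w ('X^(j.+2) * q).
Proof. by rewrite -(fappXn w 2) mulrA -exprD add2n. Qed.

Lemma coef_monic_top (B : {poly C}) k : B \is monic -> size B = k.+1 -> B`_k = 1.
Proof. by move=> hm hs; rewrite -(monicP hm) lead_coefE hs. Qed.

Lemma coef_above_size (B : {poly C}) k j : size B = k.+1 -> (k < j)%N -> B`_j = 0.
Proof. by move=> hs hj; rewrite nth_default // hs. Qed.

Lemma monic_addl (A B : {poly C}) k : A \is monic -> size A = k.+1 ->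
  (size B <= k)%N -> size (A + B) = k.+1 /\ A + B \is monic.
Proof.
move=> Am As Bs; have lt_BA : (size B < size A)%N by rewrite As.
by rewrite size_polyDl // monicE lead_coefDl // -monicE.
Qed.

Lemma monic_addl3 (A B E : {poly C}) c d k : A \is monic -> size A = k.+1 ->
  (size B <= k)%N -> (size E <= k)%N ->
  size (A + c *: B + d *: E) = k.+1 /\ A + c *: B + d *: E \is monic.
Proof.
move=> Am As Bs Es; have [s1 m1] := monic_addl Am As (leq_trans (size_scale_leq c B) Bs).
exact: monic_addl m1 s1 (leq_trans (size_scale_leq d E) Es).
Qed.

Lemma size_reduce_lead (p B : {poly C}) k : (size p <= k.+1)%N -> B \is monic ->
  size B = k.+1 -> (size (p - p`_k *: B)%R <= k)%N.
Proof.
move=> hp hm hs; apply/leq_sizeP => j hj; rewrite coefB coefZ.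
case: (ltngtP k j) => [hkj|hjk|<-].
- by rewrite (coef_above_size hs hkj) mulr0 subr0 nth_default //; apply: leq_trans hp _.
- by move: hj; rewrite leqNgt hjk.
- by rewrite (coef_monic_top hm hs) mulr1 subrr.
Qed.

Lemma size_sub_monic (p q : {poly C}) k : p \is monic -> size p = k.+1 ->
  q \is monic -> size q = k.+1 -> (size (p - q)%R <= k)%N.
Proof.
move=> pm ps qm qs; have := size_reduce_lead (eq_leq ps) qm qs.
by rewrite (coef_monic_top pm ps) scale1r.
Qed.

Lemma monic_pair_indep (A B : {poly C}) k l m : A \is monic -> size A = k.+2 ->
  B \is monic -> size B = k.+1 -> l *: A + m *: B = 0 -> l = 0 /\ m = 0.
Proof.
move=> Am As Bm Bs h.
have hl : l = 0.
  have := congr1 (fun p : {poly C} => p`_k.+1) h; rewrite /= coefD !coefZ coef0.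
  by rewrite (coef_monic_top Am As) (coef_above_size Bs (ltnSn k)) mulr1 mulr0 addr0.
split=> //; have := congr1 (fun p : {poly C} => p`_k) h; rewrite /= coefD !coefZ coef0.
by rewrite hl (coef_monic_top Bm Bs) mul0r mulr1 add0r.
Qed.

Lemma wronsk_at0 (p q : {poly C}) : (wronsk p q).[0] = p`_0 * q`_1 - p`_1 * q`_0.
Proof.
by rewrite /wronsk hornerD hornerN !hornerM !horner_coef0 !coef_deriv !mulr1n.
Qed.

Lemma wronsk0_kernel (p q : {poly C}) : (wronsk p q).[0] = 0 ->
  exists l m : C, [/\ (l != 0) || (m != 0), l * p`_0 + m * q`_0 = 0
                    & l * p`_1 + m * q`_1 = 0].
Proof.
rewrite wronsk_at0 => h.
have [hx|hx] := boolP ((q`_0 != 0) || (p`_0 != 0)).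
  exists q`_0, (- p`_0); split; [by rewrite oppr_eq0 | ring |].
  by transitivity (- (p`_0 * q`_1 - p`_1 * q`_0)); [ring | rewrite h oppr0].
move: hx; rewrite negb_or !negbK => /andP [/eqP hq0 /eqP hp0].
have [hy|hy] := boolP ((q`_1 != 0) || (p`_1 != 0)).
  by exists q`_1, (- p`_1); split; [rewrite oppr_eq0 | rewrite hq0 hp0; ring | ring].
move: hy; rewrite negb_or !negbK => /andP [/eqP hq1 /eqP hp1].
by exists 1, 0; rewrite hp0 hp1 !mulr0 !mul0r addr0 oner_neq0.
Qed.

Definition orth_family (w : moments) (B : nat -> {poly C}) : Prop :=
  [/\ forall k, B k \is monic, forall k, size (B k) = k.+1,
      forall k j, (j < k)%N -> fapp w ('X^j * B k) = 0
    & forall k, fapp w ('X^k * B k) != 0].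

Section OrthFamily.
Variables (w : moments) (B : nat -> {poly C}).
Hypothesis hB : orth_family w B.

Lemma orth_family_zero s (T : {poly C}) : (size T <= s)%N ->
  (forall j, (j < s)%N -> fapp w ('X^j * T) = 0) -> T = 0.
Proof.
have [Bm Bs Bo Bn] := hB; elim: s T => [|s IH] T hT hO.
  by apply/eqP; rewrite -size_poly_eq0 -leqn0.
have hred : T - T`_s *: B s = 0.
  apply: IH; first exact: size_reduce_lead.
  move=> j hj; rewrite mulrBr fappB -scalerAr fappZ Bo // hO ?mulr0 ?subr0 //.
  exact: ltnW.
have hTB : T = T`_s *: B s by apply/eqP; rewrite -subr_eq0 hred.
have := hO s (ltnSn s); rewrite hTB -scalerAr fappZ => /eqP.
by rewrite mulf_eq0 (negbTE (Bn s)) orbF => /eqP ->; rewrite scale0r.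
Qed.

Lemma orth_family_unique n (R : {poly C}) : R \is monic -> size R = n.+1 ->
  (forall j, (j < n)%N -> fapp w ('X^j * R) = 0) -> R = B n.
Proof.
move=> hm hs hO; have [Bm Bs Bo _] := hB.
apply/eqP; rewrite -subr_eq0; apply/eqP; apply: (@orth_family_zero n).
  exact: size_sub_monic.
by move=> j hj; rewrite mulrBr fappB hO // Bo // subrr.
Qed.

Lemma orth_family_expand2 n (T : {poly C}) : (size T <= n.+2)%N ->
  (forall j, (j < n)%N -> fapp w ('X^j * T) = 0) ->
  exists c1 c0, T = c1 *: B n.+1 + c0 *: B n.
Proof.
move=> hs hO; have [Bm Bs Bo _] := hB.
set T1 := T - T`_n.+1 *: B n.+1.
have h1 : (size T1 <= n.+1)%N by apply: size_reduce_lead.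
set T2 := T1 - T1`_n *: B n.
have h2 : T2 = 0.
  apply: (orth_family_zero (size_reduce_lead h1 (Bm n) (Bs n))) => j hj.
  rewrite /T2 /T1 !mulrBr !fappB -!scalerAr !fappZ hO // !Bo ?mulr0 ?subr0 //.
  exact: ltnW.
exists T`_n.+1, T1`_n.
by move/eqP: h2; rewrite subr_eq0 => /eqP <-; rewrite /T1 addrC subrK.
Qed.

End OrthFamily.

Lemma smop_orth_lower (w : moments) (P : nat -> {poly C}) : is_SMOP w P ->
  forall s k (q : {poly C}), (size q <= s)%N -> (s <= k)%N -> fapp w (q * P k) = 0.
Proof.
case=> Pm Ps Po _; elim=> [|s IH] k q hq hk.
  by move: hq; rewrite leqn0 size_poly_eq0 => /eqP ->; rewrite mul0r fapp0.
have -> : q = (q - q`_s *: P s) + q`_s *: P s by rewrite subrK.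
rewrite mulrDl fappD IH ?size_reduce_lead //; last exact: ltnW.
by rewrite -scalerAl fappZ Po ?mulr0 ?addr0 // neq_ltn hk.
Qed.

Lemma smop_orth_family (w : moments) (P : nat -> {poly C}) :
  is_SMOP w P -> orth_family w P.
Proof.
move=> hS; have [Pm Ps _ Pn] := hS; split=> //.
  move=> k j hj; apply: (smop_orth_lower hS (s := j.+1)) => //.
  by rewrite size_polyXn.
move=> k; have -> : 'X^k * P k = P k * P k - (P k - 'X^k) * P k.
  by rewrite mulrBl opprB addrC subrK.
rewrite fappB (smop_orth_lower hS (s := k) (q := P k - 'X^k)) ?subr0 //.
exact: size_sub_monic (monicXn _ _) (size_polyXn _ _).
Qed.

Lemma TTRR_1 P a b : TTRR P a b -> P 1%N = 'X * P 0%N - b 0%N *: P 0%N.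
Proof. by case=> _ h _ _; rewrite h; ring. Qed.

Lemma TTRR_SS P a b n : TTRR P a b ->
  P n.+2 = 'X * P n.+1 - b n.+1 *: P n.+1 - a n.+1 *: P n.
Proof. by case=> _ _ h _; rewrite h; ring. Qed.

Lemma assoc1_0 a b : assoc1 a b 0 = 1. Proof. by []. Qed.
Lemma assoc1_1 a b : assoc1 a b 1 = 'X - (b 1%N)%:P. Proof. by []. Qed.
Lemma assoc1_SS a b n : assoc1 a b n.+2 =
  ('X - (b n.+2)%:P) * assoc1 a b n.+1 - a n.+2 *: assoc1 a b n.
Proof. by rewrite /assoc1 /=; case: (assoc1_aux a b n). Qed.

Lemma assoc1_monic a b n : size (assoc1 a b n) = n.+1 /\ assoc1 a b n \is monic.
Proof.
suff: (size (assoc1 a b n) = n.+1 /\ assoc1 a b n \is monic) /\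
      (size (assoc1 a b n.+1) = n.+2 /\ assoc1 a b n.+1 \is monic) by case.
elim: n => [|n [[s0 m0] [s1 m1]]].
  by rewrite assoc1_0 assoc1_1 size_poly1 monic1 size_XsubC monicXsubC.
split=> //; rewrite assoc1_SS.
have mXq : ('X - (b n.+2)%:P) * assoc1 a b n.+1 \is monic by rewrite monicMl ?monicXsubC.
have sXq : size (('X - (b n.+2)%:P) * assoc1 a b n.+1) = n.+3.
  by rewrite size_monicM ?monicXsubC ?monic_neq0 // size_XsubC s1.
apply: monic_addl mXq sXq _; rewrite size_polyN.
by apply: leq_trans (size_scale_leq _ _) _; rewrite s0.
Qed.

(* All the
   matrices of the theorem vanish outside the band |i - j| <= 2, so their
   products are finite sums, and a matrix X "represents" the passage from a
   sequence F to a sequence G when each row sum  sum_j X_{i,j} F_j  equals G_i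
   as soon as it is long enough. *)
Definition upper_band (A : infmx) : Prop := forall i j, (i.+3 <= j)%N -> A i j = 0.
Definition lower_band (A : infmx) : Prop := forall i j, (j.+3 <= i)%N -> A i j = 0.

Definition row_action (w : nat) (X : infmx) (F G : nat -> {poly C}) : Prop :=
  forall i K, (i + w <= K)%N -> \sum_(j < K) X i j *: F j = G i.

Definition band_mul (A B : infmx) : infmx := fun i j => \sum_(k < i.+3) A i k * B k j.

Lemma sum_trunc (V : nmodType) (F : nat -> V) n m : (n <= m)%N ->
  (forall k, (n <= k)%N -> F k = 0) -> \sum_(k < m) F k = \sum_(k < n) F k.
Proof.
move=> h hF; rewrite -(subnKC h); elim: (m - n)%N => [|d IH]; first by rewrite addn0.
by rewrite addnS big_ord_recr /= IH hF ?addr0 // leq_addr.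
Qed.

Lemma band_mulP A B : upper_band A -> mxprod_is A B (band_mul A B).
Proof.
move=> hA i j; exists i.+3 => K hK.
by rewrite (sum_trunc (F := fun k => A i k * B k j) hK) // => k hk; rewrite hA // mul0r.
Qed.

Lemma band_mul_upper A B : upper_band B -> forall i j, (i + 5 <= j)%N -> band_mul A B i j = 0.
Proof.
move=> hB i j hj; rewrite /band_mul big1 // => k _; rewrite hB ?mulr0 //.
by have := ltn_ord k; lia.
Qed.

Lemma row_action_mul A B F G H : upper_band A -> row_action 5 B F G ->
  row_action 5 A G H -> row_action 8 (band_mul A B) F H.
Proof.
move=> hA hB hAr i K hK; rewrite /band_mul.
under eq_bigr => j _ do rewrite scaler_suml.
rewrite exchange_big /= -(hAr i (i + 5)%N) //.
rewrite (sum_trunc (F := fun k => A i k *: G k) (n := i.+3)); last first.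
- by move=> k hk; rewrite hA ?scale0r.
- by lia.
apply: eq_bigr => k _; rewrite -(hB k K); last by have := ltn_ord k; lia.
by rewrite scaler_sumr; apply: eq_bigr => j _; rewrite scalerA.
Qed.

Lemma row_action_mull w X F G (p : {poly C}) : row_action w X F G ->
  row_action w X (fun k => p * F k) (fun k => p * G k).
Proof.
move=> h i K hK; rewrite -(h i K hK) mulr_sumr; apply: eq_bigr => j _.
by rewrite scalerAr.
Qed.

Lemma row_action_ext w X F G G' : (forall k, G k = G' k) ->
  row_action w X F G -> row_action w X F G'.
Proof. by move=> e h i K hK; rewrite -e; apply: h. Qed.

Lemma monic_family_indep (F : nat -> {poly C}) : (forall k, F k \is monic) ->
  (forall k, size (F k) = k.+1) -> forall K (c : nat -> C),
  \sum_(j < K) c j *: F j = 0 -> forall j, (j < K)%N -> c j = 0.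
Proof.
move=> Fm Fs; elim=> [|K IH] c h j hj //.
rewrite big_ord_recr /= in h.
have hK : c K = 0.
  have := congr1 (fun p : {poly C} => p`_K) h; rewrite /= coefD coef_sum coefZ.
  rewrite (coef_monic_top (Fm K) (Fs K)) mulr1 coef0 big1 ?add0r // => i _.
  by rewrite coefZ (coef_above_size (Fs i)) ?mulr0.
rewrite hK scale0r addr0 in h.
by move: hj; rewrite ltnS leq_eqVlt => /orP [/eqP -> //|hj]; apply: IH.
Qed.

Lemma row_action_unique (F : nat -> {poly C}) M1 M2 H : (forall k, F k \is monic) ->
  (forall k, size (F k) = k.+1) -> row_action 8 M1 F H -> row_action 8 M2 F H ->
  (forall i j, (i + 5 <= j)%N -> M1 i j = 0) ->
  (forall i j, (i + 5 <= j)%N -> M2 i j = 0) -> forall i j, M1 i j = M2 i j.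
Proof.
move=> Fm Fs h1 h2 z1 z2 i j.
case: (ltnP j (i + 8)) => hj; last by rewrite z1 ?z2 //; lia.
apply/eqP; rewrite -subr_eq0; apply/eqP.
apply: (monic_family_indep Fm Fs (K := (i + 8)%N) (c := fun j => M1 i j - M2 i j)) => //.
under eq_bigr => k _ do rewrite scalerBl.
by rewrite sumrB h1 // h2 // subrr.
Qed.

Lemma banded_products_agree (A B A' B' : infmx) (F H : nat -> {poly C}) :
  (forall k, F k \is monic) -> (forall k, size (F k) = k.+1) ->
  upper_band A -> upper_band A' -> upper_band B -> upper_band B' ->
  row_action 8 (band_mul A B) F H -> row_action 8 (band_mul A' B') F H ->
  exists M, mxprod_is A B M /\ mxprod_is A' B' M.
Proof.
move=> Fm Fs hA hA' hB hB' h1 h2; exists (band_mul A B); split; first exact: band_mulP.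
have e := row_action_unique Fm Fs h1 h2 (band_mul_upper A hB) (band_mul_upper A' hB').
by move=> i j; have [K hK] := band_mulP B' hA' i j; exists K => K' h; rewrite hK // e.
Qed.

Ltac decide_nat_eqs := repeat match goal with
 | |- context [ (?x == ?y) ] =>
   let T := type of x in unify T nat;
   let E := fresh "E" in
   first [ have E : (x == y) = true by (apply/eqP; lia)
         | have E : (x == y) = false by (apply/negbTE/eqP; lia) ];
   rewrite E; clear E
end.

Lemma row_window (X : infmx) (F : nat -> {poly C}) i K : upper_band X -> lower_band X ->
  (i + 5 <= K)%N -> \sum_(j < K) X i j *: F j =
   X i (i - 2)%N *: F (i - 2)%N + X i (i - 2).+1 *: F (i - 2).+1
   + X i (i - 2).+2 *: F (i - 2).+2 + X i (i - 2).+3 *: F (i - 2).+3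
   + X i (i - 2).+4 *: F (i - 2).+4.
Proof.
move=> hu hl hK.
rewrite (sum_trunc (F := fun j => X i j *: F j) (n := ((i - 2) + 5)%N)); last 2 first.
- by lia.
- by move=> j hj; rewrite hu ?scale0r //; lia.
have -> : ((i - 2) + 5 = (i - 2).+4.+1)%N by lia.
rewrite !big_ord_recr /= big1 ?add0r // => j _.
by rewrite hl ?scale0r //; have := ltn_ord j; lia.
Qed.

Ltac split_row_index i hK := case: i hK => [|[|n]] _;
  [ have -> : (0 - 2 = 0)%N by []
  | have -> : (1 - 2 = 0)%N by []
  | have -> : (n.+2 - 2 = n)%N by lia ].

Lemma jacobi_upper c d : upper_band (jacobi c d).
Proof. by move=> i j h; rewrite /jacobi; decide_nat_eqs. Qed.
Lemma jacobi_lower c d : lower_band (jacobi c d).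
Proof. by move=> i j h; rewrite /jacobi; decide_nat_eqs. Qed.
Lemma Lmx_upper P b : upper_band (Lmx P b).
Proof. by move=> i j h; rewrite /Lmx; decide_nat_eqs. Qed.
Lemma Lmx_lower P b : lower_band (Lmx P b).
Proof. by move=> i j h; rewrite /Lmx; decide_nat_eqs. Qed.
Lemma Umx_upper Pm : upper_band (Umx Pm).
Proof. by move=> i j h; rewrite /Umx; decide_nat_eqs. Qed.
Lemma Umx_lower Pm : lower_band (Umx Pm).
Proof. by move=> i j h; rewrite /Umx; decide_nat_eqs. Qed.

Lemma jacobi_row_action P a b : TTRR P a b -> row_action 5 (jacobi b a) P (fun k => 'X * P k).
Proof.
case=> _ h0 h1 _ i K hK; rewrite (row_window _ (jacobi_upper _ _) (jacobi_lower _ _) hK).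
split_row_index i hK; rewrite /jacobi; decide_nat_eqs; rewrite !scale0r ?scale1r !addr0 ?add0r;
  [ rewrite h0 | rewrite (h1 0%N) | rewrite (h1 n.+1) ]; rewrite -?mul_polyC; ring.
Qed.

Lemma assoc1_TTRR a b : (forall n, a n.+1 != 0) ->
  TTRR (assoc1 a b) (fun n => a n.+1) (fun n => b n.+1).
Proof.
move=> ha; split=> //.
- by rewrite assoc1_1 assoc1_0 mulr1 alg_polyC subrK.
- move=> n; rewrite assoc1_SS mulrBl mul_polyC; ring.
Qed.

Lemma jacobi_sq_row_action P a b : TTRR P a b ->
  row_action 8 (band_mul (jacobi b a) (jacobi b a)) P (fun k => 'X^2 * P k).
Proof.
move=> hT; have hJ := jacobi_row_action hT.
apply: (row_action_ext (G := fun k => 'X * ('X * P k))); first by move=> k; rewrite mulrA -expr2.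
exact: row_action_mul (jacobi_upper _ _) hJ (row_action_mull 'X hJ).
Qed.

(* For a pair of
   functionals (u, v) put
     G(p)_j = [j = 0] p'(0) + [j = 1] p(0) - sum_{s<j} v_s u(x^{j-1-s} p).
   G is linear in p, G(x p)_j = G(p)_{j+1} + v_j u(p), and G(1) = 0 when
   v = u^{-1}.  These are also the rules obeyed by j |-> u_0 v(x^j P1_m), so the
   two can be compared by induction on m. *)
Definition inv_form (u v : moments) (p : {poly C}) (j : nat) : C :=
  (if j == 0%N then p`_1 else 0) + (if j == 1%N then p`_0 else 0)
  - \sum_(s < j) v s * fapp u ('X^(j - s.+1) * p).

Lemma inv_formB u v p q j :
  inv_form u v (p - q) j = inv_form u v p j - inv_form u v q j.
Proof.
rewrite /inv_form !coefB.
under eq_bigr => s _ do rewrite mulrBr fappB mulrBr.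
by rewrite sumrB; case: (j == 0%N); case: (j == 1%N); ring.
Qed.

Lemma inv_formZ u v c p j : inv_form u v (c *: p) j = c * inv_form u v p j.
Proof.
rewrite /inv_form !coefZ.
under eq_bigr => s _ do rewrite -scalerAr fappZ mulrCA.
by rewrite -mulr_sumr; case: (j == 0%N); case: (j == 1%N); ring.
Qed.

Lemma inv_formX u v p j :
  inv_form u v ('X * p) j = inv_form u v p j.+1 + v j * fapp u p.
Proof.
rewrite /inv_form !coefXM /= big_ord_recr /= subnn expr0 mul1r.
have -> : \sum_(s < j) v s * fapp u ('X^(j - s.+1) * ('X * p))
        = \sum_(s < j) v s * fapp u ('X^(j - s) * p).
  apply: eq_bigr => s _; rewrite mulrA -exprSr; congr (_ * fapp u ('X^_ * _)).
  by have := ltn_ord s; lia.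
rewrite if_same eqSS; under [in RHS]eq_bigr => i _ do rewrite subSS.
by case: (j == 0%N); ring.
Qed.

Lemma inv_form1 u v j : is_inverse u v -> inv_form u v 1 j = 0.
Proof.
move=> hinv; rewrite /inv_form !coef1.
case: j => [|k]; first by rewrite big_ord0 /= !addr0 subr0.
under eq_bigr => s _ do rewrite mulr1 fappXn1.
rewrite (reindex_inj rev_ord_inj) /=.
have -> : \sum_(i < k.+1) v (k.+1 - i.+1)%N * u (k.+1 - (k.+1 - i.+1).+1)%N
          = \sum_(i < k.+1) u i * v (k - i)%N.
  apply: eq_bigr => i _; rewrite mulrC; have := ltn_ord i => hi.
  by congr (u _ * v _); lia.
by rewrite hinv; case: k => [|k] /=; ring.
Qed.

Lemma inv_form_step u v (A B Q PA PB PQ : {poly C}) c d :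
  (forall j, u 0%N * fapp v ('X^j * A) = inv_form u v PA j) ->
  (forall j, u 0%N * fapp v ('X^j * B) = inv_form u v PB j) ->
  Q = 'X * A - c *: A - d *: B -> PQ = 'X * PA - c *: PA - d *: PB ->
  fapp u PA = 0 ->
  forall j, u 0%N * fapp v ('X^j * Q) = inv_form u v PQ j.
Proof.
move=> hA hB -> -> hu j.
rewrite !inv_formB !inv_formZ inv_formX hu mulr0 addr0 -!hA -hB.
by rewrite !mulrBr !fappB -!scalerAr !fappZ mulrA -exprSr; ring.
Qed.

Section InverseFunctional.
Variables (u v : moments) (P Pm : nat -> {poly C}) (a b : nat -> C).
Hypotheses (hS : is_SMOP u P) (hT : TTRR P a b) (hinv : is_inverse u v)
  (hSm : is_SMOP v Pm).
Local Notation P1 := (assoc1 a b).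

(* u_0 = u(P_0^2) is nonzero. *)
Lemma u0_neq0 : u 0%N != 0.
Proof.
have [_ _ _ Pn] := smop_orth_family hS; have [P0 _ _ _] := hT.
by have := Pn 0%N; rewrite P0 expr0 mul1r fapp1.
Qed.

(* u_0 v(x^j P1_m) = G(P_{m+1})_j, by induction on m: both sides obey the
   recurrence of the associated polynomials, since u(P_{m+1}) = 0. *)
Lemma inv_pairing_assoc m j : u 0%N * fapp v ('X^j * P1 m) = inv_form u v (P m.+1) j.
Proof.
have [_ _ Po _] := smop_orth_family hS; have [P0 _ _ _] := hT.
have uP n : fapp u (P n.+1) = 0.
  by have := Po n.+1 0%N (ltn0Sn n); rewrite expr0 mul1r.
have h0 j' : u 0%N * fapp v ('X^j' * P1 0) = inv_form u v (P 1%N) j'.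
  rewrite assoc1_0 mulr1 fappXn1 (TTRR_1 hT) P0 inv_formB inv_formZ inv_formX.
  by rewrite !(inv_form1 _ hinv) fapp1; ring.
suff: (forall j', u 0%N * fapp v ('X^j' * P1 m) = inv_form u v (P m.+1) j') /\
      (forall j', u 0%N * fapp v ('X^j' * P1 m.+1) = inv_form u v (P m.+2) j').
  by case.
elim: m => [|m [IH1 IH2]].
  split=> //; apply: (inv_form_step (B := 0) (PB := 1) (c := b 1%N) (d := a 1%N) h0).
  - by move=> j'; rewrite mulr0 fapp0 mulr0 (inv_form1 _ hinv).
  - by rewrite assoc1_1 assoc1_0 scaler0 subr0 mulr1 alg_polyC.
  - by rewrite (TTRR_SS 0 hT) P0.
  - exact: uP.
split=> //; apply: (inv_form_step IH2 IH1 (c := b m.+2) (d := a m.+2)).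
- by rewrite assoc1_SS mulrBl mul_polyC.
- exact: (TTRR_SS m.+1 hT).
- exact: uP.
Qed.

(* For j <= m+1 the sum in G(P_{m+1})_j vanishes by orthogonality. *)
Lemma inv_pairing_assoc_low m j : (j <= m.+1)%N ->
  u 0%N * fapp v ('X^j * P1 m) =
    (if j == 0%N then (P m.+1)`_1 else 0) + (if j == 1%N then (P m.+1)`_0 else 0).
Proof.
move=> hj; have [_ _ Po _] := smop_orth_family hS.
rewrite inv_pairing_assoc /inv_form big1 ?subr0 // => s _.
by rewrite Po ?mulr0 //; have := ltn_ord s; lia.
Qed.

Lemma v_orth_assoc m j : (2 <= j)%N -> (j <= m.+1)%N -> fapp v ('X^j * P1 m) = 0.
Proof.
move=> h2 hj; have := inv_pairing_assoc_low hj.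
case: j h2 hj => [|[|j]] // _ _ /=; rewrite addr0 => /eqP.
by rewrite mulf_eq0 (negbTE u0_neq0) => /eqP.
Qed.

(* W(P_{n+2}, P_{n+1})(0) != 0: otherwise a nontrivial combination of
   P1_{n+1} and P1_n would be v-orthogonal to all x^j, j < n+2. *)
Lemma wronsk_P_neq0 n : (wronsk (P n.+2) (P n.+1)).[0] != 0.
Proof.
apply/negP => /eqP /wronsk0_kernel [l [m [hlm e0 e1]]].
have [s1 m1] := assoc1_monic a b n.+1; have [s0 m0] := assoc1_monic a b n.
suff: l *: P1 n.+1 + m *: P1 n = 0.
  by case/(monic_pair_indep m1 s1 m0 s0) => hl hm; move: hlm; rewrite hl hm eqxx.
apply: (orth_family_zero (s := n.+2) (smop_orth_family hSm)).
  apply: leq_trans (size_polyD _ _) _; rewrite geq_max.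
  by rewrite !(leq_trans (size_scale_leq _ _)) ?s1 ?s0.
move=> j hj; apply: (mulfI u0_neq0).
rewrite mulr0 fappX_lin2 mulrDr !(mulrCA (u 0%N)) !inv_pairing_assoc_low; try lia.
by case: j hj => [|[|j]] hj /=; rewrite ?addr0 ?add0r ?mulr0 ?addr0.
Qed.

Lemma Pm_expand01 : Pm 0%N = P1 0 /\ Pm 1%N = P1 1 + alpha1 P b 1 *: P1 0.
Proof.
have hOm := smop_orth_family hSm.
have [s1 m1] := assoc1_monic a b 1; have [s0 m0] := assoc1_monic a b 0.
split; first by symmetry; apply: (orth_family_unique hOm).
have [hs hm] := monic_addl (B := alpha1 P b 1 *: P1 0) m1 s1
  (leq_trans (size_scale_leq _ _) (eq_leq s0)).
symmetry; apply: (orth_family_unique hOm) => // j hj.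
have -> : j = 0%N by lia.
apply: (mulfI u0_neq0); rewrite mulr0 mulrDr -scalerAr fappD fappZ mulrDr mulrCA.
rewrite !inv_pairing_assoc_low //= (TTRR_SS 0 hT) (TTRR_1 hT).
have [P0 _ _ _] := hT; rewrite P0.
by rewrite !(coefB, coefZ, coefXM, coef1) /=; ring.
Qed.

(* Second assertion: P^-_{n+2} = P1_{n+2} + alpha_{n+2,n+1} P1_{n+1}
   + alpha_{n+2,n} P1_n; the right side is monic and v-orthogonal to x^j for
   j < n+2 (the alphas are tuned for j = 0, 1). *)
Lemma Pm_expand n : Pm n.+2 =
  P1 n.+2 + alpha1 P b n.+2 *: P1 n.+1 + alpha2 P n.+2 *: P1 n.
Proof.
have [s2 m2] := assoc1_monic a b n.+2; have [s1 m1] := assoc1_monic a b n.+1.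
have [s0 m0] := assoc1_monic a b n.
have hD := wronsk_P_neq0 n; rewrite wronsk_at0 in hD.
have [hs hm] := monic_addl3 (alpha1 P b n.+2) (alpha2 P n.+2) m2 s2
  (eq_leq s1) (leqW (eq_leq s0)).
symmetry; apply: (orth_family_unique (smop_orth_family hSm)) => // j hj.
apply: (mulfI u0_neq0); rewrite mulr0 fappX_lin3 !mulrDr !(mulrCA (u 0%N)).
rewrite !inv_pairing_assoc_low; try lia.
rewrite /alpha1 /alpha2 !wronsk_at0 /=.
by case: j hj => [|[|j]] hj /=; rewrite ?addr0 ?add0r ?mulr0 ?addr0 //; field.
Qed.

Lemma assoc1_orth_family : orth_family (fun k => v (k + 2)%N) P1.
Proof.
split.
- by move=> k; case: (assoc1_monic a b k).
- by move=> k; case: (assoc1_monic a b k).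
- by move=> k j hj; rewrite fapp_shift2 v_orth_assoc //; lia.
move=> k; rewrite fapp_shift2; apply/eqP => h0.
have [_ _ _ Pn] := smop_orth_family hSm; have := Pn k.+2.
rewrite Pm_expand fappX_lin3 (v_orth_assoc (m := k.+2) (j := k.+2)) //.
by rewrite (v_orth_assoc (m := k.+1) (j := k.+2)) // h0 !mulr0 !addr0 eqxx.
Qed.

(* W(P^-_n, P^-_{n+1})(0) != 0: otherwise a nontrivial combination of
   P^-_n, P^-_{n+1} is x^2 T with T of degree < n orthogonal to x^j, j < n,
   for x^2 v, hence T = 0. *)
Lemma wronsk_Pm_neq0 n : (wronsk (Pm n) (Pm n.+1)).[0] != 0.
Proof.
apply/negP => /eqP /wronsk0_kernel [l [m [hlm e0 e1]]].
have [Pmm Pms Pmo _] := smop_orth_family hSm.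
suff: m *: Pm n.+1 + l *: Pm n = 0.
  case/(monic_pair_indep (Pmm _) (Pms _) (Pmm _) (Pms _)) => hm hl.
  by move: hlm; rewrite hl hm eqxx.
set S := m *: Pm n.+1 + l *: Pm n.
have hSX : S = drop_poly 2 S * 'X^2.
  have := poly_take_drop 2 S; rewrite [take_poly 2 S](_ : _ = 0) ?add0r //.
  apply/polyP => i; rewrite coef_take_poly coef0 /S coefD !coefZ.
  by case: i => [|[|i]] //=; rewrite addrC.
have sT : (size (drop_poly 2 S) <= n)%N.
  rewrite size_drop_poly leq_subLR add2n.
  apply: leq_trans (size_polyD _ _) _; rewrite geq_max.
  by rewrite !(leq_trans (size_scale_leq _ _)) ?Pms.
have hT0 : drop_poly 2 S = 0.
  apply: (orth_family_zero assoc1_orth_family sT) => j hj.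
  rewrite fapp_shift2 -addn2 exprD -mulrA (mulrC 'X^2) -hSX fappX_lin2 !Pmo //; last lia.
  by rewrite !mulr0 addr0.
by rewrite hSX hT0 mul0r.
Qed.

(* Third assertion: x^2 P1_n = P^-_{n+2} + beta_{n,n+1} P^-_{n+1}
   + beta_{n,n} P^-_n; the difference x^2 P1_n - P^-_{n+2} is v-orthogonal
   to x^j, j < n, and its two coordinates are read off at degrees 0 and 1. *)
Lemma X2_assoc1_expand n : 'X^2 * P1 n = Pm n.+2 + beta1 Pm n *: Pm n.+1 + beta0 Pm n *: Pm n.
Proof.
have [Pmm Pms Pmo _] := smop_orth_family hSm.
have [s0 m0] := assoc1_monic a b n.
have mX : 'X^2 * P1 n \is monic by rewrite monicMl ?monicXn.
have sX : size ('X^2 * P1 n) = n.+3.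
  by rewrite size_monicM ?monicXn ?monic_neq0 // size_polyXn s0.
set T := 'X^2 * P1 n - Pm n.+2.
have [c1 [c0 hT1]] : exists c1 c0, T = c1 *: Pm n.+1 + c0 *: Pm n.
  apply: (orth_family_expand2 (smop_orth_family hSm) (size_sub_monic mX sX (Pmm _) (Pms _))).
  move=> j hj; rewrite mulrBr fappB mulrA -exprD addn2 v_orth_assoc ?Pmo ?subr0 //; lia.
have E0 := congr1 (fun p : {poly C} => p`_0) hT1.
have E1 := congr1 (fun p : {poly C} => p`_1) hT1.
rewrite /= /T coefB coefXnM /= sub0r coefD !coefZ in E0.
rewrite /= /T coefB coefXnM /= sub0r coefD !coefZ in E1.
have {}E0 : (Pm n.+2)`_0 = - (c1 * (Pm n.+1)`_0 + c0 * (Pm n)`_0) by rewrite -E0 opprK.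
have {}E1 : (Pm n.+2)`_1 = - (c1 * (Pm n.+1)`_1 + c0 * (Pm n)`_1) by rewrite -E1 opprK.
have hD := wronsk_Pm_neq0 n; rewrite wronsk_at0 in hD.
have hc0 : c0 = beta0 Pm n.
  by rewrite /beta0 !wronsk_at0 E0 E1; field.
have hc1 : c1 = beta1 Pm n.
  by rewrite /beta1 !wronsk_at0 E0 E1; field.
by rewrite -hc0 -hc1 -addrA -hT1 /T addrC subrK.
Qed.

Lemma Lmx_row_action : row_action 5 (Lmx P b) P1 Pm.
Proof.
move=> i K hK; rewrite (row_window _ (Lmx_upper _ _) (Lmx_lower _ _) hK).
have [e0 e1] := Pm_expand01.
split_row_index i hK; rewrite /Lmx; decide_nat_eqs; rewrite !scale0r ?scale1r !addr0 ?add0r;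
  [ by rewrite e0 | by rewrite e1 addrC | by rewrite Pm_expand -!mul_polyC; ring ].
Qed.

Lemma Umx_row_action : row_action 5 (Umx Pm) Pm (fun k => 'X^2 * P1 k).
Proof.
move=> i K hK; rewrite (row_window _ (Umx_upper _) (Umx_lower _) hK).
split_row_index i hK; rewrite /Umx; decide_nat_eqs; rewrite !scale0r ?scale1r !addr0 ?add0r;
  rewrite X2_assoc1_expand -!mul_polyC; ring.
Qed.

End InverseFunctional.

Theorem mainTheorem8 (u v : moments) (P Pm : nat -> {poly C})
  (a b am bm : nat -> C) :
  quasi_definite u -> is_SMOP u P -> TTRR P a b ->
  is_inverse u v ->
  quasi_definite v -> is_SMOP v Pm -> TTRR Pm am bm ->
  let P1 := assoc1 a b in
  let J1 := jacobi (fun n => b n.+1) (fun n => a n.+1) in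
  let Jm := jacobi bm am in
  let L := Lmx P b in
  let U := Umx Pm in
  ((forall n, (2 <= n)%N -> (wronsk (P n) (P n.-1)).[0] != 0) /\
   (forall n, (wronsk (Pm n) (Pm n.+1)).[0] != 0)) /\
  [/\ Pm 0%N = P1 0%N /\ Pm 1%N = P1 1%N + alpha1 P b 1 *: P1 0%N,
      (forall n, Pm n.+2 = P1 n.+2 + alpha1 P b n.+2 *: P1 n.+1
                           + alpha2 P n.+2 *: P1 n),
      (forall n, 'X^2 * P1 n = Pm n.+2 + beta1 Pm n *: Pm n.+1
                               + beta0 Pm n *: Pm n),
      (exists M, mxprod_is J1 J1 M /\ mxprod_is U L M)
    & (exists M, mxprod_is Jm Jm M /\ mxprod_is L U M)].
Proof.
move=> _ hS hT hinv _ hSm hTm P1 J1 Jm L U.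
have P1m k : P1 k \is monic by case: (assoc1_monic a b k).
have P1s k : size (P1 k) = k.+1 by case: (assoc1_monic a b k).
have [Pmm Pms _ _] := smop_orth_family hSm.
have hT1 : TTRR P1 (fun n => a n.+1) (fun n => b n.+1).
  by apply: assoc1_TTRR => n; case: hT.
have hL := Lmx_row_action hS hT hinv hSm; have hU := Umx_row_action hS hT hinv hSm.
split; first split.
- by move=> [|[|n]] // _; exact: (wronsk_P_neq0 hS hT hinv hSm n).
- exact: (wronsk_Pm_neq0 hS hT hinv hSm).
split.
- exact: (Pm_expand01 hS hT hinv hSm).
- exact: (Pm_expand hS hT hinv hSm).
- exact: (X2_assoc1_expand hS hT hinv hSm).
- apply: (banded_products_agree P1m P1s (jacobi_upper _ _) (Umx_upper _)
    (jacobi_upper _ _) (Lmx_upper _ _) (jacobi_sq_row_action hT1)).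
  exact: row_action_mul (Umx_upper _) hL hU.
- apply: (banded_products_agree Pmm Pms (jacobi_upper _ _) (Lmx_upper _ _)
    (jacobi_upper _ _) (Umx_upper _) (jacobi_sq_row_action hTm)).
  exact: row_action_mul (Lmx_upper _ _) hU (row_action_mull 'X^2 hL).
Qed.
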